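(* Every ideal of $\mathcal{A}$ is finitely generated.
   Context: Let $\mathbf{k}$ be a commutative noetherian ring, $r$ a positive integer, and $\mathcal{A}=\bigoplus_{n,d\ge0}(\mathrm{Sym}^d\mathbf{k}^r)^{\otimes n}$, bigraded by $(d,n)$. For a split $\sigma$ of $[n+m]$ (a subset $\{i_1<\cdots<i_n\}$ and its complement $\{j_1<\cdots<j_m\}$), the shuffle product $\cdot_\sigma:(\mathrm{Sym}^d\mathbf{k}^r)^{\otimes n}\otimes(\mathrm{Sym}^d\mathbf{k}^r)^{\otimes m}\to(\mathrm{Sym}^d\mathbf{k}^r)^{\otimes(n+m)}$ puts the factors of the first argument in positions $i_1,\dots,i_n$ and those of the second in positions $j_1,\dots,j_m$. The product $*:(\mathrm{Sym}^d\mathbf{k}^r)^{\otimes n}\otimes(\mathrm{Sym}^e\mathbf{k}^r)^{\otimes n}\to(\mathrm{Sym}^{d+e}\mathbf{k}^r)^{\otimes n}$ is factorwise multiplication. All other products are $0$. An ideal of $\mathcal{A}$ is a bihomogeneous subspace $I$ such that $g*f\in I$ and $g\cdot_\sigma f\in I$ for all $f\in I$, $g\in\mathcal{A}$ and all splits $\sigma$; it is finitely generated if it is the smallest ideal containing some finite subset. *)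

From HB Require Import structures.
From mathcomp Require Import all_boot all_order all_algebra.
From mathcomp Require Import mpoly.
Set Implicit Arguments. Unset Strict Implicit. Unset Printing Implicit Defensive.
Import GRing.Theory.
Local Open Scope ring_scope.

Definition ring_ideal (k : comNzRingType) (J : k -> Prop) : Prop :=
  [/\ J 0, (forall x y, J x -> J y -> J (x + y)) & (forall c x, J x -> J (c * x))].

Definition noetherian (k : comNzRingType) : Prop :=
  forall J : k -> Prop, ring_ideal J ->
    exists s : seq k, forall x, J x <-> exists c : 'I_(size s) -> k,
        x = \sum_(i < size s) c i * s`_i.

(* Model of (Sym^d k^r)^{(x) n}: the multihomogeneous polynomials over k
   in the n*r variables x_{i,j} (i < n, j < r), variable x_{i,j} being
   'X_(mxvec_index i j), homogeneous of degree d in each block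
   {x_{i,0},...,x_{i,r-1}}.                                             *)
Definition var (k : comNzRingType) (n r : nat) (i : 'I_n) (j : 'I_r)
  : {mpoly k[n * r]} := 'X_(mxvec_index i j).

Definition multihom (k : comNzRingType) (r d n : nat) (p : {mpoly k[n * r]}) : Prop :=
  forall m, m \in msupp p -> forall i : 'I_n, (\sum_(j < r) m (mxvec_index i j))%N = d.

Definition blk (n r : nat) (v : 'I_(n * r)) : 'I_n * 'I_r :=
  enum_val (cast_ord (esym (mxvec_cast n r)) v).

Definition relabel (k : comNzRingType) (r n N : nat) (a : 'I_n -> 'I_N)
  (p : {mpoly k[n * r]}) : {mpoly k[N * r]} :=
  mmap (@mpolyC _ k) (fun v => var k (a (blk v).1) (blk v).2) p.

(* a split of [n+m]: strictly increasing a : 'I_n -> 'I_(n+m) (positions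
   i_1 < ... < i_n) and b : 'I_m -> 'I_(n+m) (positions j_1 < ... < j_m)
   with disjoint images (hence complementary). *)
Definition is_split (n m : nat) (a : 'I_n -> 'I_(n + m)) (b : 'I_m -> 'I_(n + m)) : Prop :=
  [/\ (forall i j : 'I_n, (i < j)%N -> (a i < a j)%N),
      (forall i j : 'I_m, (i < j)%N -> (b i < b j)%N) &
      (forall i j, a i != b j)].

Definition shuffle (k : comNzRingType) (r n m : nat)
  (a : 'I_n -> 'I_(n + m)) (b : 'I_m -> 'I_(n + m))
  (g : {mpoly k[n * r]}) (f : {mpoly k[m * r]}) : {mpoly k[(n + m) * r]} :=
  @relabel k r n (n + m) a g * @relabel k r m (n + m) b f.

(* A bihomogeneous subspace I = (+)_{d,n} I_{d,n} is given by its components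
   I d n : predicate on (Sym^d k^r)^{(x) n}. *)
Definition bihomset (k : comNzRingType) (r : nat) :=
  forall d n : nat, {mpoly k[n * r]} -> Prop.

Definition is_ideal (k : comNzRingType) (r : nat) (I : bihomset k r) : Prop :=
  (forall d n p, I d n p -> @multihom k r d n p) /\
  [/\ (forall d n, I d n 0),
      (forall d n p q, I d n p -> I d n q -> I d n (p + q)),
      (forall d n (c : k) p, I d n p -> I d n (c *: p)),
      (forall d e n (f g : {mpoly k[n * r]}),
          I d n f -> @multihom k r e n g -> I (d + e) n (g * f)) &
      (forall d n m (a : 'I_n -> 'I_(n + m)) (b : 'I_m -> 'I_(n + m))
              (g : {mpoly k[n * r]}) (f : {mpoly k[m * r]}),
          is_split a b -> @multihom k r d n g -> I d m f ->
          I d (n + m) (shuffle a b g f))].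

Definition generated (k : comNzRingType) (r N : nat) (dg ng : 'I_N -> nat)
  (G : forall i : 'I_N, {mpoly k[ng i * r]}) : bihomset k r :=
  fun d n p => forall J : bihomset k r, is_ideal J ->
     (forall i, J (dg i) (ng i) (G i)) -> J d n p.

Definition fin_generated (k : comNzRingType) (r : nat) (I : bihomset k r) : Prop :=
  exists N (dg ng : 'I_N -> nat) (G : forall i : 'I_N, {mpoly k[ng i * r]}),
    forall d n p, I d n p <-> @generated k r N dg ng G d n p.

From HB Require Import structures.
From mathcomp Require Import all_boot all_order all_algebra.
From mathcomp Require Import mpoly zify.
From Stdlib Require Import ClassicalEpsilon Classical.
Set Implicit Arguments. Unset Strict Implicit. Unset Printing Implicit Defensive.
Import Order.TTheory GRing.Theory.

(* A monomial of (Sym^d k^r)^(x)n is recorded by d and by its word of n blocks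
   (the monomial in the r variables of each tensor factor). Comparing d <= d'
   together with Higman's subword embedding, letters compared by divisibility,
   is a well-quasi-order. If I were not finitely generated, dependent choice
   would give f_0, f_1, ... in I, each outside the ideal of its predecessors
   and with minimal leading monomial there. Along a subsequence whose leading
   data increase, noetherianity of k makes the leading coefficient of some f_T
   a combination of the earlier ones. Shuffling in monomials (inserting blocks)
   and multiplying by a monomial moves each earlier f_t into the ideal with the
   leading monomial of f_T, so subtracting the combination from f_T lowers its
   leading monomial while staying outside the ideal of its predecessors. *)

Lemma wf_min (A : Type) (lt : A -> A -> Prop) (P : A -> Prop) x :
  well_founded lt -> P x -> exists y, P y /\ forall z, lt z y -> ~ P z.
Proof.
move=> wf_lt; elim/(well_founded_ind wf_lt): x => x IH Px.
have [[z [lt_zx Pz]]|no_smaller] := classic (exists z, lt z x /\ P z).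
  exact: IH lt_zx Pz.
by exists x; split=> // z lt_zx Pz; apply: no_smaller; exists z.
Qed.

Lemma prefix_choice (A : Type) (Q : seq A -> Prop) (P : seq A -> A -> Prop) :
  Q [::] -> (forall l, Q l -> exists a, P l a /\ Q (rcons l a)) ->
  exists f : nat -> A, forall j, Q (mkseq f j) /\ P (mkseq f j) (f j).
Proof.
move=> Q0 step; have [a0 _] := step _ Q0.
have /choice [st Hst] : forall l, exists a, Q l -> P l a /\ Q (rcons l a).
  by move=> l; have [/step [a]|] := classic (Q l); [exists a | exists a0].
pose pre := fix pre j := if j is j'.+1 then rcons (pre j') (st (pre j')) else [::].
have preE j : pre j = mkseq (fun i => st (pre i)) j.
  by elim: j => [|j IH] //=; rewrite mkseqS -IH.
have Qpre j : Q (pre j) by elim: j => [|j IH] //=; case: (Hst _ IH).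
by exists (fun j => st (pre j)) => j; rewrite -preE; split; [|case: (Hst _ (Qpre j))].
Qed.

Section WellQuasiOrder.
Variables (T : Type) (R : T -> T -> Prop).

Definition good (s : nat -> T) := exists i j, i < j /\ R (s i) (s j).
Definition wqo := forall s, good s.

Definition chain_subseq := forall s : nat -> T, exists sg : nat -> nat,
  (forall i, sg i < sg i.+1) /\ (forall i, R (s (sg i)) (s (sg i.+1))).

(* Only finitely many indices i have no later j with [R (s i) (s j)]: otherwise
   these indices would form a bad subsequence. *)
Lemma wqo_chain_subseq : wqo -> chain_subseq.
Proof.
move=> wqoR s; pose terminal i := ~ exists j, i < j /\ R (s i) (s j).
have [N HN] : exists N, forall i, N <= i -> ~ terminal i.
  apply: NNPP => inf_terminal.
  have /choice [g Hg] : forall N, exists i, N <= i /\ terminal i.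
    move=> N; apply: NNPP => none; apply: inf_terminal.
    by exists N => i le_Ni term_i; apply: none; exists i.
  pose tau := fix tau p := if p is p'.+1 then g (tau p').+1 else g 0.
  have tau_step p : tau p < tau p.+1 by case: (Hg (tau p).+1).
  have tau_mono := homo_ltn ltn_trans tau_step.
  have tau_term p : terminal (tau p).
    by case: p => [|p]; [case: (Hg 0) | case: (Hg (tau p).+1)].
  have [i [j [lt_ij Rij]]] := wqoR (s \o tau).
  by apply: (tau_term i); exists (tau j); split=> //; apply: tau_mono.
have /choice [g Hg] : forall i, exists j, N <= i -> i < j /\ R (s i) (s j).
  move=> i; have [le_Ni|] := leqP N i; last by exists 0.
  by have [j Hj] := NNPP _ (HN i le_Ni); exists j.
pose sg := fix sg p := if p is p'.+1 then g (sg p') else N.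
have N_sg p : N <= sg p.
  by elim: p => [|p IH] //=; case: (Hg (sg p) IH) => /ltnW/(leq_trans IH).
by exists sg; split=> i; case: (Hg (sg i) (N_sg i)).
Qed.

End WellQuasiOrder.

Lemma chain_subseq_and (T : Type) (R1 R2 : T -> T -> Prop) :
  (forall y x z, R1 x y -> R1 y z -> R1 x z) ->
  chain_subseq R1 -> chain_subseq R2 -> chain_subseq (fun x y => R1 x y /\ R2 x y).
Proof.
move=> R1_trans ch1 ch2 s; have [s1 [mono1 R1s]] := ch1 s.
have [s2 [mono2 R2s]] := ch2 (s \o s1).
exists (s1 \o s2); split=> i; first exact: (homo_ltn ltn_trans mono1) (mono2 i).
by split; [apply: (homo_ltn R1_trans R1s) (mono2 i) | apply: R2s].
Qed.

Lemma chain_subseq_comap (T U : Type) (R : U -> U -> Prop) (f : T -> U) :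
  chain_subseq R -> chain_subseq (fun x y => R (f x) (f y)).
Proof. by move=> chR s; apply: chR (f \o s). Qed.

Lemma chain_subseq_sub (T : Type) (R1 R2 : T -> T -> Prop) :
  (forall x y, R1 x y -> R2 x y) -> chain_subseq R1 -> chain_subseq R2.
Proof.
by move=> R12 ch1 s; have [sg [mono R1s]] := ch1 s; exists sg; split=> // i; apply: R12.
Qed.

Lemma chain_subseq_leq : chain_subseq leq.
Proof.
apply: wqo_chain_subseq => s.
have [_ [[i <-] min_i]] :=
  wf_min (P := fun v => exists i, s i = v) Wf_nat.lt_wf (ex_intro _ 0 erefl).
exists i, i.+1; split=> //; rewrite leqNgt; apply/negP => /ssrnat.ltP lt_next.
by apply: (min_i _ lt_next); exists i.+1.
Qed.

Lemma chain_subseq_lepm (r : nat) : chain_subseq (fun m1 m2 : 'X_{1..r} => (m1 <= m2)%MM).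
Proof.
suff ch_on (l : seq 'I_r) :
    chain_subseq (fun m1 m2 : 'X_{1..r} => forall j, j \in l -> m1 j <= m2 j).
  apply: (chain_subseq_sub _ (ch_on (enum 'I_r))) => m1 m2 le12.
  by apply/mnm_lepP => j; apply: le12; rewrite mem_enum.
elim: l => [|j l IH]; first by move=> s; exists id.
apply: (chain_subseq_sub _
  (chain_subseq_and _ (chain_subseq_comap (fun m : 'X_{1..r} => m j) chain_subseq_leq) IH)).
  by move=> m1 m2 [le_j le_l] i; rewrite in_cons => /predU1P [->|/le_l].
by move=> ? ? ?; apply: leq_trans.
Qed.

Section Higman.
Variables (T : Type) (R : T -> T -> Prop).
Hypothesis R_trans : forall y x z, R x y -> R y z -> R x z.

Fixpoint emb (u v : seq T) : Prop :=
  match v with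
  | [::] => u = [::]
  | y :: v' => emb u v' \/ (if u is x :: u' then R x y /\ emb u' v' else True)
  end.

Lemma emb_nil v : emb [::] v.
Proof. by case: v => [|y v] //=; right. Qed.

Lemma emb_trans v u w : emb u v -> emb v w -> emb u w.
Proof.
elim: w u v => [|z w IH] u v /=; first by move=> + vE; rewrite vE; case: u.
move=> emb_uv [emb_vw|]; first by left; apply: IH emb_uv emb_vw.
case: v emb_uv => [/= -> _|y v]; first by right.
move=> + [R_yz emb_vw] => -[emb_uv|]; first by left; apply: IH emb_uv emb_vw.
case: u => [_|x u [R_xy emb_uv]]; first by right.
by right; split; [apply: R_trans R_xy R_yz | apply: IH emb_uv emb_vw].
Qed.

Definition bad (s : nat -> seq T) := ~ good emb s.
Definition extendable (l : seq (seq T)) := exists2 s, bad s & mkseq s (size l) = l.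

Lemma minimal_bad_seq : ~ wqo emb -> exists2 f, bad f &
  forall j w, size w < size (f j) -> ~ extendable (rcons (mkseq f j) w).
Proof.
move=> /not_all_ex_not [s0 bad_s0].
pose minimal l w := extendable (rcons l w) /\
  forall w', size w' < size w -> ~ extendable (rcons l w').
have step l : extendable l -> exists w, minimal l w /\ extendable (rcons l w).
  move=> [s bad_s sE].
  have ext_s : extendable (rcons l (s (size l))).
    by exists s; rewrite // size_rcons mkseqS sE.
  have [w [ext_w min_w]] :=
    wf_min (P := fun w => extendable (rcons l w)) (Wf_nat.well_founded_ltof _ size) ext_s.
  by exists w; split=> //; split=> // w' /ssrnat.ltP; apply: min_w.
have ext_nil : extendable [::] by exists s0.
have [f Hf] := prefix_choice ext_nil step.
exists f => [[i [j [lt_ij emb_ij]]]|j w]; last by case: (Hf j) => _ [_]; apply.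
have [[s bad_s sE] _] := Hf j.+1; rewrite size_mkseq in sE.
have nthE l : l < j.+1 -> s l = f l.
  by move=> lt_l; have := congr1 (nth [::] ^~ l) sE; rewrite !nth_mkseq.
by apply: bad_s; exists i, j; rewrite !nthE //; apply: ltnW.
Qed.

Theorem higman : chain_subseq R -> wqo emb.
Proof.
move=> chR; apply: NNPP => /minimal_bad_seq [f bad_f min_f].
have f_nonnil n : f n <> [::].
  by move=> fn0; apply: bad_f; exists n, n.+1; rewrite fn0; split=> //; apply: emb_nil.
have [x0 _] : exists x0 : T, True by case: (f 0) (f_nonnil 0) => [|x0 w] //; exists x0.
pose hd n := head x0 (f n); pose tl n := behead (f n).
have fE n : f n = hd n :: tl n by rewrite /hd /tl; case: (f n) (f_nonnil n).
have [sg [sg_step R_sg]] := chR hd.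
have sg_mono := homo_ltn ltn_trans sg_step.
have R_sg_mono := homo_ltn R_trans R_sg.
have sg0_le q : sg 0 <= sg q by case: q => [|q] //; apply/ltnW/sg_mono.
pose g i := if i < sg 0 then f i else tl (sg (i - sg 0)).
have bad_g : bad g.
  move=> [i [j [lt_ij]]]; rewrite /g; case: (ltnP j (sg 0)) => [lt_j|le_j].
    by rewrite (ltn_trans lt_ij lt_j) => emb_ij; apply: bad_f; exists i, j.
  case: (ltnP i (sg 0)) => [lt_i|le_i] emb_ij; apply: bad_f.
    exists i, (sg (j - sg 0)); split; first exact: leq_trans lt_i (sg0_le _).
    by rewrite [f (sg _)]fE; left.
  exists (sg (i - sg 0)), (sg (j - sg 0)); split; first by apply: sg_mono; lia.
  by rewrite !fE; right; split=> //; apply: R_sg_mono; lia.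
apply: (min_f (sg 0) (tl (sg 0))); first by rewrite [f (sg 0)]fE.
exists g; rewrite // size_rcons size_mkseq mkseqS.
rewrite /g ltnn subnn; congr rcons; apply/eq_in_map => i.
by rewrite mem_iota => /= lt_i; rewrite lt_i.
Qed.

End Higman.

Lemma incr_ord_inj (n N : nat) (a : 'I_n -> 'I_N) : {homo a : i j / (i < j)%N} -> injective a.
Proof.
move=> a_mono i j aE; apply/val_inj/eqP.
by case: ssrnat.ltngtP => // /a_mono; rewrite aE ltnn.
Qed.

Definition mpush (n1 n2 : nat) (phi : 'I_n1 -> 'I_n2) (m : 'X_{1..n1}) : 'X_{1..n2} :=
  [multinom \sum_(v < n1 | phi v == w) m v | w < n2].

Section MonomialPushforward.
Variables (n1 n2 : nat) (phi : 'I_n1 -> 'I_n2).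

Lemma mpushE m w : mpush phi m w = \sum_(v < n1 | phi v == w) m v.
Proof. exact: mnmE. Qed.

Lemma mpush_out m w : (forall v, phi v != w) -> mpush phi m w = 0.
Proof. by move=> phi_w; rewrite mpushE big_pred0 // => v; apply/negbTE. Qed.

Lemma mdeg_mpush m : mdeg (mpush phi m) = mdeg m.
Proof.
rewrite !mdegE; under eq_bigr do rewrite mpushE.
by rewrite (exchange_big_dep xpredT) //=; apply: eq_bigr => v _; rewrite (big_pred1 (phi v)).
Qed.

Hypothesis phi_inj : injective phi.

Lemma mpush_in m v : mpush phi m (phi v) = m v.
Proof. by rewrite mpushE (big_pred1 v) // => u; rewrite /= (inj_eq phi_inj). Qed.

Lemma mpush_inj : injective (mpush phi).
Proof. by move=> m1 m2 E; apply/mnmP => v; rewrite -!mpush_in E. Qed.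

End MonomialPushforward.

Lemma mpush_lt (n1 n2 : nat) (phi : 'I_n1 -> 'I_n2) : {homo phi : u v / (u < v)%N} ->
  {homo mpush phi : m1 m2 / (m1 < m2)%O}.
Proof.
move=> phi_mono m1 m2 lt12; have phi_inj := incr_ord_inj phi_mono.
have := lemc_mdeg (ltW lt12); rewrite leq_eqVlt => /predU1P [mdegE12|mdeg_lt]; last first.
  by apply: lt_mdeg_ltmc; rewrite !mdeg_mpush.
move/ltmcP: lt12 => /(_ mdegE12) [i eq_before lt_i].
apply/ltmcP; first by rewrite !mdeg_mpush.
exists (phi i); last by rewrite !mpush_in.
move=> w; have [/existsP [v /eqP <-] lt_w|/existsPn phi_w] := boolP [exists v, phi v == w];
  last by rewrite !mpush_out.
rewrite !mpush_in //; apply: eq_before; rewrite ltnNge; apply/negP => le_iv.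
suff: phi i <= phi v by rewrite leqNgt lt_w.
by move: le_iv; rewrite leq_eqVlt => /predU1P [/val_inj -> // | /phi_mono/ltnW].
Qed.

Local Open Scope ring_scope.

Section PolyPushforward.
Variables (k : comNzRingType) (n1 n2 : nat) (phi : 'I_n1 -> 'I_n2).
Hypothesis phi_inj : injective phi.

Definition mpush_poly (p : {mpoly k[n1]}) : {mpoly k[n2]} :=
  \sum_(m <- msupp p) p@_m *: 'X_[mpush phi m].

Lemma mcoeff_mpush_poly p m0 : (mpush_poly p)@_(mpush phi m0) = p@_m0.
Proof.
rewrite raddf_sum /=; under eq_bigr do rewrite mcoeffZ mcoeffX (inj_eq (mpush_inj phi_inj)).
have [supp_m0|m0_out] := boolP (m0 \in msupp p).
  rewrite (bigD1_seq m0) ?msupp_uniq //= eqxx mulr1 big1 ?addr0 // => m.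
  by rewrite eq_sym => /negbTE ->; rewrite mulr0.
rewrite memN_msupp_eq0 // big_seq big1 // => m supp_m.
by case: eqP supp_m => [-> /(negP m0_out)|]; rewrite ?mulr0.
Qed.

Lemma msupp_mpush_poly p mu :
  mu \in msupp (mpush_poly p) -> exists2 m, m \in msupp p & mu = mpush phi m.
Proof.
move=> supp_mu; apply: NNPP => no_preimage; move: supp_mu.
rewrite mcoeff_msupp raddf_sum /= big_seq big1 ?eqxx // => m supp_m.
by rewrite mcoeffZ mcoeffX; case: eqP => [mE|]; [case: no_preimage; exists m | rewrite mulr0].
Qed.

End PolyPushforward.

Lemma index_allpairs (T1 T2 : eqType) (s : seq T1) (t : seq T2) x y :
  x \in s -> y \in t ->
  index (x, y) [seq (a, b) | a <- s, b <- t] = (index x s * size t + index y t)%N.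
Proof.
elim: s => [|a s IH] //= s_x t_y; rewrite index_cat.
have -> : ((x, y) \in [seq (a, b) | b <- t]) = (x == a).
  by apply/mapP/eqP => [[b _ [->]]|->] //; exists y.
have [->|ne_xa] := eqVneq x a; first by rewrite index_map // => u v [].
move: s_x; rewrite in_cons (negbTE ne_xa) => /IH ->//.
by rewrite size_map mulSn addnA.
Qed.

Lemma mxvec_index_val (n r : nat) (i : 'I_n) (j : 'I_r) :
  val (mxvec_index i j) = (i * r + j)%N.
Proof.
have enum_rankE (T : finType) (x : T) : val (enum_rank x) = index x (enum T).
  by rewrite -{2}(nth_enum_rank x x) index_uniq ?enum_uniq // -cardE ltn_ord.
have enum_prodE : enum {: 'I_n * 'I_r} = [seq (a, b) | a <- enum 'I_n, b <- enum 'I_r].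
  by rewrite enumT unlock.
rewrite /mxvec_index /= enum_rankE enum_prodE index_allpairs ?mem_enum //.
by rewrite !index_enum_ord size_enum_ord.
Qed.

Lemma blk_mxvec_index (n r : nat) (i : 'I_n) (j : 'I_r) : blk (mxvec_index i j) = (i, j).
Proof. by rewrite /blk /mxvec_index cast_ordK enum_rankK. Qed.

Lemma mxvec_index_inj (n r : nat) (i i' : 'I_n) (j j' : 'I_r) :
  mxvec_index i j = mxvec_index i' j' -> i = i' /\ j = j'.
Proof. by move/(congr1 (@blk n r)); rewrite !blk_mxvec_index => -[-> ->]. Qed.

Definition vrelabel (n N r : nat) (a : 'I_n -> 'I_N) (v : 'I_(n * r)) : 'I_(N * r) :=
  mxvec_index (a (blk v).1) (blk v).2.

Lemma vrelabel_mxvec_index (n N r : nat) (a : 'I_n -> 'I_N) (i : 'I_n) (j : 'I_r) :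
  vrelabel a (mxvec_index i j) = mxvec_index (a i) j.
Proof. by rewrite /vrelabel blk_mxvec_index. Qed.

(* Variables are numbered block by block, so an increasing relabelling of the
   blocks is an increasing relabelling of the variables. *)
Lemma vrelabel_incr (n N r : nat) (a : 'I_n -> 'I_N) :
  {homo a : i j / (i < j)%N} -> {homo vrelabel (r := r) a : u v / (u < v)%N}.
Proof.
move=> a_mono u v; case/mxvec_indexP: u => i1 j1; case/mxvec_indexP: v => i2 j2.
rewrite !vrelabel_mxvec_index !mxvec_index_val.
have := ltn_ord j1; have := ltn_ord j2.
case: (ssrnat.ltngtP i1 i2) => [/a_mono|lt21|/val_inj ->]; nia.
Qed.

Section Relabel.
Variables (k : comNzRingType) (r n N : nat) (a : 'I_n -> 'I_N).
Hypothesis a_mono : {homo a : i j / (i < j)%N}.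

Let vrelabel_inj : injective (vrelabel (r := r) a).
Proof. exact/incr_ord_inj/vrelabel_incr. Qed.

Lemma relabelE (p : {mpoly k[n * r]}) : relabel a p = mpush_poly (vrelabel a) p.
Proof.
rewrite /relabel /mmap /mpush_poly; apply: eq_bigr => m _.
rewrite mul_mpolyC /mmap1 /var mprodXnE; congr (_ *: 'X_[_]).
apply/mnmP => w; rewrite mnm_sumE mpushE [RHS]big_mkcond /=; apply: eq_bigr => v _.
by rewrite mulmnE mnm1E; case: eqP => _; rewrite ?mul1n ?mul0n.
Qed.

Lemma mcoeff_relabel (p : {mpoly k[n * r]}) m :
  (relabel a p)@_(mpush (vrelabel a) m) = p@_m.
Proof. by rewrite relabelE (mcoeff_mpush_poly vrelabel_inj). Qed.

Lemma msupp_relabel (p : {mpoly k[n * r]}) mu : mu \in msupp (relabel a p) ->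
  exists2 m, m \in msupp p & mu = mpush (vrelabel a) m.
Proof. by rewrite relabelE => /msupp_mpush_poly; apply. Qed.

Lemma relabelX (m : 'X_{1..n * r}) :
  relabel a ('X_[m] : {mpoly k[n * r]}) = 'X_[mpush (vrelabel a) m].
Proof. by rewrite relabelE /mpush_poly msuppX big_seq1 mcoeffX eqxx scale1r. Qed.

End Relabel.

Definition block (n r : nat) (m : 'X_{1..n * r}) (i : 'I_n) : 'X_{1..r} :=
  [multinom m (mxvec_index i j) | j < r].

Definition word (n r : nat) (m : 'X_{1..n * r}) : seq 'X_{1..r} :=
  [seq block m i | i <- enum 'I_n].

Lemma size_word (n r : nat) (m : 'X_{1..n * r}) : size (word m) = n.
Proof. by rewrite size_map size_enum_ord. Qed.

Lemma nth_word (n r : nat) (m : 'X_{1..n * r}) (i : 'I_n) : nth 0%MM (word m) i = block m i.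
Proof. by rewrite (nth_map i) ?size_enum_ord // nth_ord_enum. Qed.

Lemma all_mdeg_word (n r d : nat) (m : 'X_{1..n * r}) :
  reflect (forall i, mdeg (block m i) = d) (all (fun y => mdeg y == d) (word m)).
Proof.
apply: (iffP allP) => [all_d i | deg_d _ /mapP [i _ ->]]; last by rewrite deg_d.
by apply/eqP/all_d/map_f; rewrite mem_enum.
Qed.

Definition ins (T : Type) (p : nat) (w : T) (s : seq T) := take p s ++ w :: drop p s.

Lemma size_ins (T : Type) p (w : T) s : (p <= size s)%N -> size (ins p w s) = (size s).+1.
Proof. by move=> le_p; rewrite /ins size_cat /= size_takel // size_drop; lia. Qed.

Lemma nth_ins (T : Type) x0 (s : seq T) p w i : (p <= size s)%N ->
  nth x0 (ins p w s) i =
    if (i < p)%N then nth x0 s i else if i == p then w else nth x0 s i.-1.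
Proof.
move=> le_p; rewrite /ins nth_cat size_takel //.
case: ltnP => [lt_ip|le_pi]; first by rewrite nth_take.
case: eqVneq => [->|ne_ip]; first by rewrite subnn.
have lt_pi : (p < i)%N by rewrite ltn_neqAle eq_sym ne_ip.
by case: i le_pi ne_ip lt_pi => [|i] //= *; rewrite subSn //= nth_drop; congr nth; lia.
Qed.

Lemma all_ins (T : Type) (P : pred T) p w (s : seq T) : all P (ins p w s) = P w && all P s.
Proof. by rewrite /ins all_cat /= -{3}(cat_take_drop p s) all_cat andbCA. Qed.

Section LeadBound.
Variables (k : comNzRingType) (N : nat).
Implicit Types (f g : {mpoly k[N]}) (al m : 'X_{1..N}).

(* [c] may be zero, so [al] need not be the leading monomial of [f]. *)
Definition lead_bound f al (c : k) := f@_al = c /\ forall m, m \in msupp f -> (m <= al)%O.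

Lemma lead_bound_mlead f : lead_bound f (mlead f) (mleadc f).
Proof. by split=> // m; apply: msupp_le_mlead. Qed.

Lemma lead_bound_lincomb T (h : 'I_T -> {mpoly k[N]}) (a c : 'I_T -> k) al :
  (forall t, lead_bound (h t) al (a t)) ->
  lead_bound (\sum_t c t *: h t) al (\sum_t c t * a t).
Proof.
move=> h_bound; apply: (big_ind2 (fun f c => lead_bound f al c)).
- by split=> [|m]; rewrite ?mcoeff0 ?msupp0.
- move=> f1 c1 f2 c2 [f1_al f1_supp] [f2_al f2_supp].
  split; first by rewrite mcoeffD f1_al f2_al.
  by move=> m /msuppD_le; rewrite mem_cat => /orP [/f1_supp|/f2_supp].
- move=> t _; have [ht_al ht_supp] := h_bound t; split; first by rewrite mcoeffZ ht_al.
  by move=> m /msuppZ_le/ht_supp.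
Qed.

Lemma lead_bound_mulX f al c (A : 'X_{1..N}) :
  lead_bound f al c -> lead_bound ('X_[A] * f) (A + al)%MM c.
Proof.
move=> [f_al f_supp]; split; first by rewrite mulrC mcoeffMX.
move=> m; rewrite mulrC (perm_mem (msuppMX _ _)) => /mapP [m' /f_supp le_m' ->].
by rewrite lemc_add2r.
Qed.

Lemma lead_bound_sub_lt f g al c :
  lead_bound f al c -> lead_bound g al c -> f - g != 0 -> (mlead (f - g) < al)%O.
Proof.
move=> [f_al f_supp] [g_al g_supp] /mlead_supp; rewrite mcoeff_msupp mcoeffB.
have [//|gt_al|->] := ltgtP (mlead (f - g)) al; last by rewrite f_al g_al subrr eqxx.
have out (h : {mpoly k[N]}) :
    (forall m, m \in msupp h -> (m <= al)%O) -> h@_(mlead (f - g)) = 0.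
  by move=> h_supp; apply: memN_msupp_eq0; apply/negP => /h_supp; rewrite leNgt gt_al.
by rewrite (out f) // (out g) // subrr eqxx.
Qed.

End LeadBound.

Lemma lift_incr n (h : 'I_n) : {homo lift h : i j / (i < j)%N}.
Proof.
by move=> i j lt_ij; rewrite /= /bump; case: (leqP h i) => ?; case: (leqP h j) => ? /=; lia.
Qed.

(* Inserting a block of degree [d] at position [p] is the shuffle product with
   a monomial [x^W] in one tensor factor, placed at position [p]. *)
Section BlockInsertion.
Variables (k : comNzRingType) (r n p : nat).
Hypothesis le_pn : (p <= n)%N.

Let p0 : 'I_(1 + n) := Ordinal (le_pn : (p < 1 + n)%N).
Let a : 'I_1 -> 'I_(1 + n) := fun=> p0.
Let b : 'I_n -> 'I_(1 + n) := lift p0.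
Let a_incr : {homo a : i j / (i < j)%N}.
Proof. by move=> i j; rewrite !ord1. Qed.
Let b_incr : {homo b : i j / (i < j)%N} := lift_incr p0.

Definition block_mnm (w : 'X_{1..r}) : 'X_{1..1 * r} := [multinom w (blk v).2 | v < 1 * r].

Lemma word_insert (w : 'X_{1..r}) (al : 'X_{1..n * r}) :
  word (mpush (vrelabel a) (block_mnm w) + mpush (vrelabel b) al)%MM = ins p w (word al).
Proof.
have a_inj := incr_ord_inj (vrelabel_incr (r := r) a_incr).
have b_inj := incr_ord_inj (vrelabel_incr (r := r) b_incr).
apply: (@eq_from_nth _ 0%MM) => [|i]; first by rewrite size_word size_ins ?size_word.
rewrite size_word => lt_i; pose i' : 'I_(1 + n) := Ordinal lt_i.
rewrite -[i]/(val i') nth_word nth_ins ?size_word //; apply/mnmP => j.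
rewrite mnmE mnmDE; case: (unliftP p0 i') => [i'' ->|->].
- rewrite mpush_out; last first.
    case/mxvec_indexP => v1 v2; rewrite vrelabel_mxvec_index.
    by apply/eqP => /mxvec_index_inj [vE _]; move: (neq_lift p0 i''); rewrite -vE eqxx.
  rewrite -vrelabel_mxvec_index mpush_in // add0n /= /bump.
  case: (leqP p i'') => [le_p|lt_p]; rewrite /= ?add1n ?add0n.
    by rewrite ltnNge (leqW le_p) gtn_eqF //= nth_word mnmE.
  by rewrite lt_p nth_word mnmE.
- rewrite -[mxvec_index p0 j]/(mxvec_index (a ord0) j) -vrelabel_mxvec_index.
  rewrite mpush_in // mpush_out; last first.
    case/mxvec_indexP => v1 v2; rewrite vrelabel_mxvec_index.
    apply/eqP => /mxvec_index_inj [vE _].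
    by move: (neq_lift p0 v1); rewrite -[lift p0 v1]/(b v1) vE eqxx.
  by rewrite addn0 /= ltnn eqxx mnmE blk_mxvec_index.
Qed.

Lemma lead_bound_shuffle (w : 'X_{1..r}) (f : {mpoly k[n * r]}) al c :
  lead_bound f al c ->
  lead_bound (shuffle a b 'X_[block_mnm w] f)
             (mpush (vrelabel a) (block_mnm w) + mpush (vrelabel b) al)%MM c.
Proof.
move=> [f_al f_supp]; rewrite /shuffle relabelX //; apply: lead_bound_mulX.
split; first by rewrite mcoeff_relabel.
move=> m /msupp_relabel [m' /f_supp le_m' ->].
move: le_m'; rewrite le_eqVlt => /predU1P [->//|].
by move/(mpush_lt (vrelabel_incr b_incr))/ltW.
Qed.

Lemma ideal_insert_block (J : bihomset k r) d (f : {mpoly k[n * r]}) al c w :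
  is_ideal J -> mdeg w = d -> J d n f -> lead_bound f al c ->
  exists (h : {mpoly k[n.+1 * r]}) al',
    [/\ J d n.+1 h, lead_bound h al' c & word al' = ins p w (word al)].
Proof.
move=> [_ [_ _ _ _ J_shuffle]] w_deg Jf f_bound.
have hom_W : @multihom k r d 1 'X_[block_mnm w].
  move=> m; rewrite msuppX mem_seq1 => /eqP -> i; rewrite -w_deg mdegE.
  by apply: eq_bigr => j _; rewrite mnmE blk_mxvec_index.
have split_ab : is_split a b by split=> // i j; apply: neq_lift.
exists (shuffle a b 'X_[block_mnm w] f).
exists (mpush (vrelabel a) (block_mnm w) + mpush (vrelabel b) al)%MM.
by split; [exact: (J_shuffle d 1 n) | apply: lead_bound_shuffle | apply: word_insert].
Qed.

End BlockInsertion.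

Lemma mdeg_block (k : comNzRingType) (r d n : nat) (p : {mpoly k[n * r]}) m i :
  multihom d p -> m \in msupp p -> mdeg (block m i) = d.
Proof.
by move=> hom_p supp_m; rewrite mdegE -(hom_p m supp_m i); apply: eq_bigr => j _; rewrite mnmE.
Qed.

Lemma exists_mnm_le (r : nat) (y : 'X_{1..r}) d :
  (d <= mdeg y)%N -> exists2 c, (c <= y)%MM & mdeg c = d.
Proof.
elim: d => [|d IH] le_dy.
  by exists 0%MM; [apply/mnm_lepP => i; rewrite mnm0E | rewrite mdeg0].
have [c /mnm_lepP le_cy c_deg] := IH (ltnW le_dy).
have [j lt_j] : exists j, (c j < y j)%N.
  apply: NNPP => all_le; move: le_dy; rewrite -c_deg !mdegE ltnNge => /negP; apply.
  by apply: leq_sum => j _; rewrite leqNgt; apply/negP => lt_j; apply: all_le; exists j.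
exists (c + U_(j))%MM; last by rewrite mdegD mdeg1 c_deg addn1.
apply/mnm_lepP => i; rewrite mnmDE mnm1E; case: eqP => [<-|_]; first by rewrite addn1.
by rewrite addn0.
Qed.

Definition mnm_emb (r : nat) := emb (fun x y : 'X_{1..r} => (x <= y)%MM).

Lemma mnm_emb_trans (r : nat) (v u w : seq 'X_{1..r}) :
  mnm_emb u v -> mnm_emb v w -> mnm_emb u w.
Proof. by apply: emb_trans => y x z; apply: lepm_trans. Qed.

Lemma chain_subseq_mnm_emb (r : nat) : chain_subseq (@mnm_emb r).
Proof.
apply/wqo_chain_subseq/higman/chain_subseq_lepm.
by move=> y x z; apply: lepm_trans.
Qed.

Inductive insertions (r d : nat) (u : seq 'X_{1..r}) : seq 'X_{1..r} -> Prop :=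
| insertions_refl : insertions d u u
| insertions_step v p w :
    insertions d u v -> mdeg w = d -> (p <= size v)%N -> insertions d u (ins p w v).

Lemma insertions_cons (r d : nat) (x : 'X_{1..r}) u v :
  insertions d u v -> insertions d (x :: u) (x :: v).
Proof.
elim=> [|v' p w _ IH w_deg le_p]; first exact: insertions_refl.
by rewrite -[x :: ins _ _ _]/(ins p.+1 w (x :: v')); apply: insertions_step.
Qed.

Lemma insertions_mdeg (r d : nat) (u v : seq 'X_{1..r}) : insertions d u v ->
  all (fun x => mdeg x == d) u -> all (fun x => mdeg x == d) v.
Proof. by elim=> // v' p w _ IH w_deg _ /IH; rewrite all_ins w_deg eqxx. Qed.

Lemma emb_insertions (r d' d : nat) (be u : seq 'X_{1..r}) :
  (d' <= d)%N -> all (fun y => mdeg y == d) be -> mnm_emb u be ->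
  exists2 v, insertions d' u v &
    size v = size be /\ forall i, (nth 0%MM v i <= nth 0%MM be i)%MM.
Proof.
move=> le_d; rewrite /mnm_emb; elim: be u => [|y be IH] u /=.
  by move=> _ ->; exists [::]; [apply: insertions_refl | split=> // i; rewrite nth_nil lepm_refl].
move=> /andP [/eqP y_deg be_deg].
have push_front v : insertions d' u v ->
    size v = size be /\ (forall i, (nth 0%MM v i <= nth 0%MM be i)%MM) ->
    exists2 v', insertions d' u v' &
      size v' = (size be).+1 /\ forall i, (nth 0%MM v' i <= nth 0%MM (y :: be) i)%MM.
  move=> ins_v [size_v le_v]; rewrite -y_deg in le_d.
  have [c le_cy c_deg] := exists_mnm_le le_d.
  exists (ins 0 c v); first exact: insertions_step.
  by rewrite size_ins // size_v /ins take0 drop0; split=> // -[].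
case=> [/(IH _ be_deg) [v ins_v v_le]|]; first exact: push_front ins_v v_le.
case: u push_front => [push_front _|x u _ [le_xy /(IH _ be_deg) [v ins_v [size_v le_v]]]].
  by have [v ins_v v_le] := IH [::] be_deg (emb_nil _ _); apply: push_front ins_v v_le.
exists (x :: v); first exact: insertions_cons.
by split; [rewrite /= size_v | case].
Qed.

Section IdealLift.
Variables (k : comNzRingType) (r : nat) (J : bihomset k r).
Arguments J : clear implicits.
Hypothesis J_ideal : is_ideal J.

Lemma ideal_insertions d (u v : seq 'X_{1..r}) : insertions d u v ->
  forall n (f : {mpoly k[n * r]}) (al : 'X_{1..n * r}) (c : k),
    word al = u -> J d n f -> lead_bound f al c ->
  exists N (h : {mpoly k[N * r]}) al', [/\ J d N h, lead_bound h al' c & word al' = v].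
Proof.
elim=> [|v' p w _ IH w_deg le_p] n f al c al_u Jf f_bound; first by exists n, f, al.
have [N [h [al' [Jh h_bound al'_v']]]] := IH n f al c al_u Jf f_bound.
have le_pN : (p <= N)%N by rewrite -(size_word al') al'_v'.
have [h' [al'' [Jh' h'_bound al''_ins]]] := ideal_insert_block le_pN J_ideal w_deg Jh h_bound.
by exists N.+1, h', al''; rewrite al''_ins al'_v'.
Qed.

(* Multiplying by the monomial [x^(be - al)] raises every block to degree [d]. *)
Lemma ideal_lead_raise d' d n (h : {mpoly k[n * r]}) al c (be : 'X_{1..n * r}) :
  (d' <= d)%N -> J d' n h -> lead_bound h al c ->
  (forall i, block al i <= block be i)%MM ->
  (forall i, mdeg (block al i) = d') -> (forall i, mdeg (block be i) = d) ->
  exists2 h' : {mpoly k[n * r]}, J d n h' & lead_bound h' be c.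
Proof.
move=> le_d Jh h_bound le_blocks al_deg be_deg.
have [_ [_ _ _ J_mul _]] := J_ideal.
have le_al_be : (al <= be)%MM.
  apply/mnm_lepP => v; case/mxvec_indexP: v => i j.
  by have /mnm_lepP := le_blocks i; move/(_ j); rewrite !mnmE.
have hom_X : @multihom k r (d - d') n 'X_[be - al].
  move=> m; rewrite msuppX mem_seq1 => /eqP -> i.
  rewrite -(al_deg i) -(be_deg i) !mdegE -sumnB; last first.
    by move=> j _; have /mnm_lepP := le_blocks i; move/(_ j).
  by apply: eq_bigr => j _; rewrite mnmBE !mnmE.
exists ('X_[be - al] * h); first by rewrite -(subnKC le_d); apply: J_mul.
by rewrite -{2}(submK le_al_be); apply: lead_bound_mulX.
Qed.

Lemma ideal_lead_lift d' d n' n (f : {mpoly k[n' * r]}) (be : 'X_{1..n * r}) :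
  J d' n' f -> (d' <= d)%N -> mnm_emb (word (mlead f)) (word be) ->
  (forall i, mdeg (block be i) = d) ->
  exists2 h : {mpoly k[n * r]}, J d n h & lead_bound h be (mleadc f).
Proof.
move=> Jf le_d emb_f be_deg; have [J_hom [J0 _ _ _ _]] := J_ideal.
have [->|f_neq0] := eqVneq f 0.
  by exists 0; [apply: J0 | rewrite mleadc0; split=> [|m]; rewrite ?mcoeff0 ?msupp0].
have f_deg i : mdeg (block (mlead f) i) = d'.
  exact: mdeg_block (J_hom _ _ _ Jf) (mlead_supp f_neq0).
have [v ins_v [size_v le_v]] :=
  emb_insertions le_d (introT (all_mdeg_word _ _) be_deg) emb_f.
have [N [h [al [Jh h_bound al_v]]]] :=
  ideal_insertions ins_v erefl Jf (lead_bound_mlead f).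
have N_n : N = n by rewrite -(size_word al) al_v size_v size_word.
subst N; apply: ideal_lead_raise le_d Jh h_bound _ _ be_deg.
  by move=> i; have := le_v i; rewrite -al_v !nth_word.
by apply/all_mdeg_word; rewrite al_v; apply: insertions_mdeg ins_v _; apply/all_mdeg_word.
Qed.

End IdealLift.

Section Ideals.
Variables (k : comNzRingType) (r : nat).
Implicit Types (I J : bihomset k r).

Lemma idealB J d n (p q : {mpoly k[n * r]}) :
  is_ideal J -> J d n p -> J d n q -> J d n (p - q).
Proof. by move=> [_ [_ JD JZ _ _]] Jp Jq; rewrite -scaleN1r; apply/JD/JZ. Qed.

Lemma is_ideal_generated I N (dg ng : 'I_N -> nat) (G : forall i, {mpoly k[ng i * r]}) :
  is_ideal I -> (forall i, I (dg i) (ng i) (G i)) -> is_ideal (@generated k r N dg ng G).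
Proof.
move=> I_ideal IG; split.
  by move=> d n p /(_ I I_ideal IG); case: I_ideal => I_hom _; apply: I_hom.
split=> [d n J [_ [J0 _ _ _ _]] //|d n p q Gp Gq J J_ideal JG|d n c p Gp J J_ideal JG|
         d e n p g Gp hom_g J J_ideal JG|d n m a b g p ab hom_g Gp J J_ideal JG].
- by have [_ [_ JD _ _ _]] := J_ideal; apply: JD; [apply: Gp | apply: Gq].
- by have [_ [_ _ JZ _ _]] := J_ideal; apply: JZ; apply: Gp.
- by have [_ [_ _ _ JM _]] := J_ideal; apply: JM => //; apply: Gp.
- by have [_ [_ _ _ _ JS]] := J_ideal; apply: JS => //; apply: Gp.
Qed.

Record bihom := Bihom { bdeg : nat; blen : nat; bpoly : {mpoly k[blen * r]} }.

Definition contains J (e : bihom) := J (bdeg e) (blen e) (bpoly e).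

Definition bihom0 := @Bihom 0 0 0.

Definition ideal_of (l : seq bihom) : bihomset k r :=
  @generated k r (size l) (fun i => bdeg (nth bihom0 l i))
            (fun i => blen (nth bihom0 l i)) (fun i => bpoly (nth bihom0 l i)).
Arguments ideal_of l d n _ : clear implicits.

Definition all_in J (l : seq bihom) :=
  forall i, (i < size l)%N -> contains J (nth bihom0 l i).

Lemma ideal_of_sub J l d n p : is_ideal J -> all_in J l -> ideal_of l d n p -> J d n p.
Proof. by move=> J_ideal Jl; apply; rewrite // => i; apply/Jl. Qed.

Lemma is_ideal_ideal_of I l : is_ideal I -> all_in I l -> is_ideal (ideal_of l).
Proof. by move=> I_ideal Il; apply: is_ideal_generated I_ideal _ => i; apply/Il. Qed.

Lemma mem_ideal_of l i : (i < size l)%N -> contains (ideal_of l) (nth bihom0 l i).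
Proof. by move=> lt_i J _ JG; apply: (JG (Ordinal lt_i)). Qed.

Lemma not_fin_generated_witness I : is_ideal I -> ~ fin_generated I ->
  forall l, all_in I l -> exists e, contains I e /\ ~ contains (ideal_of l) e.
Proof.
move=> I_ideal not_fg l Il; apply: NNPP => none; apply: not_fg.
exists (size l), (fun i => bdeg (nth bihom0 l i)), (fun i => blen (nth bihom0 l i)).
exists (fun i => bpoly (nth bihom0 l i)) => d n p; split=> [Ip|]; last exact: ideal_of_sub.
by apply: NNPP => not_in; apply: none; exists (@Bihom d n p).
Qed.

Definition lead_minimal I l (e : bihom) :=
  forall p : {mpoly k[blen e * r]},
    I (bdeg e) (blen e) p -> ~ ideal_of l (bdeg e) (blen e) p -> ~ (mlead p < mlead (bpoly e))%O.

Lemma minimal_nongenerated_seq I : is_ideal I -> ~ fin_generated I ->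
  exists f : nat -> bihom, forall j,
    [/\ contains I (f j), ~ contains (ideal_of (mkseq f j)) (f j)
       & lead_minimal I (mkseq f j) (f j)].
Proof.
move=> I_ideal not_fg.
have step l : all_in I l -> exists e,
    [/\ contains I e, ~ contains (ideal_of l) e & lead_minimal I l e] /\ all_in I (rcons l e).
  move=> Il; have [[d n p] [Ie not_in]] := not_fin_generated_witness I_ideal not_fg Il.
  have [m [[q [Iq [not_in_q qE]]] m_min]] :=
    wf_min (P := fun m => exists q, I d n q /\ ~ ideal_of l d n q /\ mlead q = m)
           (@ltom_wf (n * r)) (ex_intro _ p (conj Ie (conj not_in erefl))).
  exists (@Bihom d n q); split.
    split=> // q' Iq' not_in_q' lt_q'.
    by apply: (m_min (mlead q')); [rewrite -qE | exists q'].
  by move=> i; rewrite size_rcons ltnS leq_eqVlt nth_rcons => /predU1P [->|lt_i];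
    rewrite ?ltnn ?eqxx ?lt_i //; apply: Il.
have nil_in : all_in I [::] by [].
have [f Hf] := prefix_choice nil_in step.
by exists f => j; case: (Hf j).
Qed.

Definition lead_le (e e' : bihom) :=
  (bdeg e <= bdeg e')%N /\ mnm_emb (word (mlead (bpoly e))) (word (mlead (bpoly e'))).

Lemma lead_le_chain (s : nat -> bihom) : exists sg : nat -> nat,
  {homo sg : p q / (p < q)%N} /\ forall p q, (p < q)%N -> lead_le (s (sg p)) (s (sg q)).
Proof.
have chain : chain_subseq lead_le.
  apply: chain_subseq_and; first by move=> ? ? ?; apply: leq_trans.
    exact: chain_subseq_comap chain_subseq_leq.
  exact: chain_subseq_comap (@chain_subseq_mnm_emb r).
have [sg [sg_step lead_step]] := chain s.
exists sg; split; first exact: homo_ltn ltn_trans sg_step.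
apply: homo_ltn lead_step => e2 e1 e3 [le12 emb12] [le23 emb23].
split; first exact: leq_trans le12 le23.
exact: mnm_emb_trans emb12 emb23.
Qed.

Lemma ideal_lead_comb J T (g : 'I_T -> bihom) (c : 'I_T -> k) (e : bihom) :
  is_ideal J -> (forall t, contains J (g t)) -> (forall t, lead_le (g t) e) ->
  multihom (bdeg e) (bpoly e) -> bpoly e != 0 ->
  exists2 q, J (bdeg e) (blen e) q &
    lead_bound q (mlead (bpoly e)) (\sum_t c t * mleadc (bpoly (g t))).
Proof.
move=> J_ideal Jg g_le hom_e e_neq0.
have e_deg i : mdeg (block (mlead (bpoly e)) i) = bdeg e.
  exact: mdeg_block hom_e (mlead_supp e_neq0).
have /choice [h Hh] : forall t, exists h : {mpoly k[blen e * r]},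
    J (bdeg e) (blen e) h /\ lead_bound h (mlead (bpoly e)) (mleadc (bpoly (g t))).
  move=> t; have [le_d emb_t] := g_le t.
  by have [h Jh h_bound] := ideal_lead_lift J_ideal (Jg t) le_d emb_t e_deg; exists h.
exists (\sum_t c t *: h t); last by apply: lead_bound_lincomb => t; case: (Hh t).
have [_ [J0 JD JZ _ _]] := J_ideal.
by apply: big_ind => [|p q|t _]; [apply: J0 | apply: JD | apply/JZ; case: (Hh t)].
Qed.

End Ideals.

Arguments ideal_of {k r} l d n _.

Section NoetherianRecurrence.
Variables (k : comNzRingType) (u : nat -> k).

Definition prefix_comb t (x : k) := exists c : nat -> k, x = \sum_(l < t) c l * u l.

Lemma prefix_comb_widen t t' x : (t <= t')%N -> prefix_comb t x -> prefix_comb t' x.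
Proof.
move=> le_t [c ->]; exists (fun l => if (l < t)%N then c l else 0).
rewrite (big_ord_widen _ (fun l => c l * u l) le_t) big_mkcond /=.
by apply: eq_bigr => l _; case: ifP; rewrite ?mul0r.
Qed.

Lemma ring_ideal_prefix_comb : ring_ideal (fun x => exists t, prefix_comb t x).
Proof.
split=> [|x y [t1 x_t1] [t2 y_t2]|a x [t [c ->]]].
- by exists 0%N, (fun=> 0); rewrite big_ord0.
- have [[c1 ->] [c2 ->]] := (prefix_comb_widen (leq_maxl t1 t2) x_t1,
                             prefix_comb_widen (leq_maxr t1 t2) y_t2).
  exists (maxn t1 t2), (fun l => c1 l + c2 l).
  by rewrite -big_split; apply: eq_bigr => l _; rewrite mulrDl.
- by exists t, (fun l => a * c l); rewrite mulr_sumr; apply: eq_bigr => l _; rewrite mulrA.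
Qed.

(* The ideal spanned by all the [u l] is finitely generated, and its finitely
   many generators only involve an initial segment [u 0, ..., u (T - 1)]. *)
Lemma noetherian_recurrence : noetherian k ->
  exists T (c : nat -> k), u T = \sum_(l < T) c l * u l.
Proof.
move=> noeth_k; have [s gen_s] := noeth_k _ ring_ideal_prefix_comb.
have /choice [t t_s] : forall i : 'I_(size s), exists t, prefix_comb t s`_i.
  move=> i; apply/(gen_s s`_i); exists (fun j => (j == i)%:R).
  by rewrite (bigD1 i) //= eqxx mul1r big1 ?addr0 // => j /negbTE ->; rewrite mul0r.
pose T := \max_(i < size s) t i; exists T.
have [a uT_a] : exists a : 'I_(size s) -> k, u T = \sum_i a i * s`_i.
  apply/gen_s; exists T.+1, (fun l => (l == T)%:R).
  rewrite big_ord_recr /= eqxx mul1r big1 ?add0r // => l _.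
  by rewrite (ltn_eqF (ltn_ord l)) mul0r.
have /choice [c cE] : forall i : 'I_(size s), prefix_comb T s`_i.
  by move=> i; apply: prefix_comb_widen (leq_bigmax i) (t_s i).
exists (fun l => \sum_i a i * c i l); rewrite uT_a.
under eq_bigr do rewrite cE mulr_sumr.
rewrite exchange_big /=; apply: eq_bigr => l _; rewrite mulr_suml.
by apply: eq_bigr => i _; rewrite mulrA.
Qed.

End NoetherianRecurrence.

Theorem corollary2p9 (k : comNzRingType) (r : nat) :
  noetherian k -> (0 < r)%N ->
  forall I : bihomset k r, is_ideal I -> fin_generated I.
Proof.
move=> noeth_k _ I I_ideal; apply: NNPP => not_fg.
have [f f_min] := minimal_nongenerated_seq I_ideal not_fg.
have [sg [sg_mono sg_lead]] := lead_le_chain f.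
have [T [c lcT]] := noetherian_recurrence (fun t => mleadc (bpoly (f (sg t)))) noeth_k.
set e := f (sg T); pose l := mkseq f (sg T); have [Ie not_l_e e_min] := f_min (sg T).
have l_in : all_in I l.
  by move=> i; rewrite size_mkseq => lt_i; rewrite nth_mkseq //; case: (f_min i).
have l_ideal := is_ideal_ideal_of I_ideal l_in; have [_ [l0 lD _ _ _]] := l_ideal.
have g_in (t : 'I_T) : contains (ideal_of l) (f (sg t)).
  have lt_t := sg_mono _ _ (ltn_ord t).
  by rewrite -(nth_mkseq (bihom0 k r) f lt_t); apply: mem_ideal_of; rewrite size_mkseq.
have e_neq0 : bpoly e != 0.
  by apply/eqP => e0; apply: not_l_e; rewrite /contains e0; apply: l0.
have [q l_q q_bound] := ideal_lead_comb (fun t : 'I_T => c t) l_ideal g_in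
  (fun t => sg_lead _ _ (ltn_ord t)) (proj1 I_ideal _ _ _ Ie) e_neq0.
rewrite -lcT in q_bound.
have not_l_diff : ~ ideal_of l (bdeg e) (blen e) (bpoly e - q).
  by move=> l_diff; apply: not_l_e; rewrite /contains -(subrK q (bpoly e)); apply: lD.
apply: (e_min _ (idealB I_ideal Ie (ideal_of_sub I_ideal l_in l_q)) not_l_diff).
apply: lead_bound_sub_lt (lead_bound_mlead _) q_bound _.
by apply/eqP => diff0; apply: not_l_diff; rewrite diff0; apply: l0.
Qed.
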